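(* Consider a cellular network with $n$ base stations $\mathcal{N}=\{1,\dots,n\}$, base station $i$ serving a nonempty set $\mathcal{J}_i$ of users (pairwise disjoint), channel gains $g_{kj}>0$, noise power $\sigma^2>0$, and $$f_i(\mathbf{x};\mathbf{r},\mathbf{p})=\sum_{j\in\mathcal{J}_i}\frac{r_{ij}}{\log\Big(1+\frac{p_i g_{ij}}{\sum_{k\ne i} p_k g_{kj} x_k+\sigma^2}\Big)}.$$ Let $\mathbf{r}>\mathbf{0}$ be a satisfiable rate vector and suppose the load $\mathbf{x}$ is implementable with power $\mathbf{p}$ and rate $\mathbf{r}$, i.e., $\mathbf{x}=\mathbf{f}(\mathbf{x};\mathbf{r},\mathbf{p})$. Then, for any norm $\|\cdot\|$ on $\mathbb{R}^n$, there exists $\delta>0$ such that any load vector $\mathbf{x}'$ with $\|\mathbf{x}'-\mathbf{x}\|\le\delta$ is implementable. Moreover, the implementable load region $\mathcal{L}=\{\mathbf{x}\ge\mathbf{0}:\ \mathbf{x}=\mathbf{f}(\mathbf{x};\mathbf{r},\mathbf{p})\ \text{for some}\ \mathbf{p}\ge\mathbf{0}\}$ is open.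
   Context: Vector inequalities are componentwise; $\log$ is natural logarithm. A rate vector $\mathbf{r}$ is satisfiable if $\rho(\mathbf{\Lambda}(\mathbf{r}))<1$, where $\rho$ is the spectral radius and $\mathbf{\Lambda}(\mathbf{r})$ has entries $\lambda_{ii}=0$ and $\lambda_{ik}=\sum_{j\in\mathcal{J}_i}g_{kj}r_{ij}/g_{ij}$ for $i\ne k$. Given satisfiable $\mathbf{r}$, a load $\mathbf{x}$ is implementable if there exists a power vector $\mathbf{p}$ with $\mathbf{x}=\mathbf{f}(\mathbf{x};\mathbf{r},\mathbf{p})$. *)

From mathcomp Require Import all_boot all_order all_algebra.
Import Order.TTheory GRing.Theory Num.Theory.
From mathcomp Require Import all_classical all_reals all_analysis.
From mathcomp Require Import complex.
Import numFieldNormedType.Exports.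

Set Implicit Arguments.
Unset Strict Implicit.
Unset Printing Implicit Defensive.

Local Open Scope ring_scope.
Local Open Scope classical_set_scope.

Section Cellular.
Variable R : realType.

Definition cmodulus (z : complex.complex R) : R := Num.sqrt (complex.Re z ^+ 2 + complex.Im z ^+ 2).

Definition eigenvalue_C (n : nat) (A : 'M[R]_n) (l : complex.complex R) : Prop :=
  root (char_poly (map_mx (complex.real_complex R) A)) l.

(* spectral radius: the largest modulus of a (complex) eigenvalue
   (a finite, nonempty set when n >= 1; 0 by convention of [sup] when n = 0) *)
Definition spectral_radius (n : nat) (A : 'M[R]_n) : R :=
  sup [set cmodulus l | l in eigenvalue_C A].

(* Network data: n base stations 'I_n, m users 'I_m.
   J i : {set 'I_m}  = users served by base station i,
   g k j           = channel gain from base station k to user j,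
   s2              = noise power sigma^2,
   r i j           = rate r_{ij} of user j (in J i) served by base station i. *)

Definition Lambda (n m : nat) (J : 'I_n -> {set 'I_m}) (g : 'I_n -> 'I_m -> R)
  (r : 'I_n -> 'I_m -> R) : 'M[R]_n :=
  \matrix_(i, k) (if i == k then 0
                  else \sum_(j in J i) g k j * r i j / g i j).

Definition satisfiable (n m : nat) (J : 'I_n -> {set 'I_m}) (g : 'I_n -> 'I_m -> R)
  (r : 'I_n -> 'I_m -> R) : Prop :=
  spectral_radius (Lambda J g r) < 1.

Definition load_map (n m : nat) (J : 'I_n -> {set 'I_m}) (g : 'I_n -> 'I_m -> R)
  (s2 : R) (r : 'I_n -> 'I_m -> R) (p x : 'rV[R]_n) (i : 'I_n) : R :=
  \sum_(j in J i)
     r i j / ln (1 + p 0 i * g i j /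
                    (\sum_(k < n | k != i) p 0 k * g k j * x 0 k + s2)).

(* x is implementable (for rate r): x >= 0 and x = f(x; r, p) for some
   admissible power vector p (p > 0, needed for f to be defined). *)
Definition implementable (n m : nat) (J : 'I_n -> {set 'I_m}) (g : 'I_n -> 'I_m -> R)
  (s2 : R) (r : 'I_n -> 'I_m -> R) (x : 'rV[R]_n) : Prop :=
  (forall i, 0 <= x 0 i) /\
  exists p : 'rV[R]_n, (forall i, 0 < p 0 i) /\
    (forall i, x 0 i = load_map J g s2 r p x i).

Definition load_region (n m : nat) (J : 'I_n -> {set 'I_m}) (g : 'I_n -> 'I_m -> R)
  (s2 : R) (r : 'I_n -> 'I_m -> R) : set 'rV[R]_n :=
  [set x | implementable J g s2 r x].

Definition is_norm (n : nat) (N : 'rV[R]_n -> R) : Prop :=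
  [/\ forall x, 0 <= N x,
      forall x, N x = 0 -> x = 0,
      forall (a : R) x, N (a *: x) = `|a| * N x
    & forall x y, N (x + y) <= N x + N y].

End Cellular.

(* The load f_i(x; p) of cell i is a sum of terms r_ij / ln (1 + SINR_ij); it decreases
   in the own power p_i and increases in the other powers and in the other loads.  Hence,
   if some power makes f(y; p) <= y at a positive y, the componentwise infimum of all such
   powers is again such a power, and it is a fixed point: in each coordinate the best
   response (the power that makes the load exactly y_i, found by the intermediate value
   theorem) is at most the infimum, and lowering the coordinate to it stays feasible.
   At an implementable x with power p, doubling p strictly lowers every f_i(x; .) since the
   noise becomes relatively smaller; by continuity f(x'; 2p) < x' for all x' near x, so the
   implementable loads form an open set.  For an arbitrary norm the neighbourhood is
   transferred through c |v| <= N v, which follows from the compactness of the unit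
   sphere. *)

From mathcomp Require Import all_boot all_order all_algebra.
Import Order.TTheory GRing.Theory Num.Theory.
From mathcomp Require Import all_classical all_reals all_analysis.
From mathcomp Require Import complex.
From mathcomp Require Import lra ring.
Import numFieldNormedType.Exports.

Set Implicit Arguments.
Unset Strict Implicit.
Unset Printing Implicit Defensive.

Local Open Scope ring_scope.
Local Open Scope classical_set_scope.

Section rate_ln1D.
Variable R : realType.
Implicit Types a b c : R.

Lemma rate_ln1D_gt0 c a : 0 < c -> 0 < a -> 0 < c / ln (1 + a).
Proof. by move=> c0 a0; rewrite divr_gt0 // ln_gt0 // ltrDl. Qed.

Lemma rate_ln1D_lt c a b : 0 < c -> 0 < a -> a < b ->
  c / ln (1 + b) < c / ln (1 + a).
Proof.
move=> c0 a0 ab; have b0 := lt_trans a0 ab.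
rewrite ltr_pM2l // ltf_pV2 ?posrE ?ln_gt0 ?ltrDl //.
by rewrite ltr_ln ?ltrD2l // posrE; lra.
Qed.

Lemma rate_ln1D_le c a b : 0 < c -> 0 < a -> a <= b ->
  c / ln (1 + b) <= c / ln (1 + a).
Proof.
move=> c0 a0; rewrite le_eqVlt => /predU1P[-> //|ab].
exact/ltW/rate_ln1D_lt.
Qed.

Lemma cvg_rate_ln1D T (F : set_system T) {FF : Filter F} c (f : T -> R) a :
  0 < a -> f @ F --> a -> c / ln (1 + f t) @[t --> F] --> c / ln (1 + a).
Proof.
move=> a0 fa; apply: cvgMl_tmp; apply: cvgV; first by rewrite gt_eqF // ln_gt0 // ltrDl.
apply: (continuous_cvg _ (continuous_ln _)); last exact: cvgD (cvg_cst _) fa.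
lra.
Qed.

End rate_ln1D.

Section cell_load.
Variables (R : realType) (I : finType) (A : {set I}) (w : I -> R).
Hypothesis A_neq0 : (0 < #|A|)%N.
Hypothesis w_gt0 : forall j, j \in A -> 0 < w j.
Implicit Types (a b c : I -> R) (s y : R).

Definition cell_load a := \sum_(j in A) w j / ln (1 + a j).

Let hasA : has (fun j => j \in A) (index_enum I).
Proof. by case/card_gt0P: A_neq0 => j Aj; apply/hasP; exists j; rewrite ?mem_index_enum. Qed.

Let sum_gt0 (F : I -> R) : (forall j, j \in A -> 0 < F j) -> 0 < \sum_(j in A) F j.
Proof. by move/(ltr_sum hasA); rewrite big1_eq. Qed.

Lemma cell_load_gt0 a : (forall j, j \in A -> 0 < a j) -> 0 < cell_load a.
Proof. by move=> a_gt0; apply: sum_gt0 => j Aj; rewrite rate_ln1D_gt0 ?w_gt0 ?a_gt0. Qed.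

Lemma le_cell_load a b : (forall j, j \in A -> 0 < a j <= b j) ->
  cell_load b <= cell_load a.
Proof.
move=> ab; rewrite /cell_load; apply: ler_sum => j Aj; have /andP[a0 abj] := ab j Aj.
by apply: rate_ln1D_le => //; apply: w_gt0.
Qed.

Lemma lt_cell_load a b : (forall j, j \in A -> 0 < a j < b j) ->
  cell_load b < cell_load a.
Proof.
move=> ab; rewrite /cell_load; apply: ltr_sum hasA _ => j Aj; have /andP[a0 abj] := ab j Aj.
by apply: rate_ln1D_lt => //; apply: w_gt0.
Qed.

Lemma cvg_cell_load T (F : set_system T) {FF : Filter F} (f : T -> I -> R) a :
  (forall j, j \in A -> 0 < a j) -> (forall j, j \in A -> f ^~ j @ F --> a j) ->
  cell_load (f t) @[t --> F] --> cell_load a.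
Proof.
move=> a_gt0 fa; apply: cvg_big => [|j Aj]; first exact: add_continuous.
exact: cvg_rate_ln1D (a_gt0 _ Aj) (fa _ Aj).
Qed.

(* Since [ln (1 + t) <= t], the term of any single user [j0] is already [y] at this scaling. *)
Lemma cell_load_scale_ge c y : (forall j, j \in A -> 0 < c j) -> 0 < y ->
  exists2 s, 0 < s & y <= cell_load (fun j => s * c j).
Proof.
move=> c_gt0 y_gt0; case/card_gt0P: A_neq0 => j0 Aj0.
have [c0 w0] := (c_gt0 _ Aj0, w_gt0 Aj0).
have s_gt0 : 0 < w j0 / (y * c j0) by rewrite divr_gt0 ?mulr_gt0.
exists (w j0 / (y * c j0)) => //; set s := w j0 / _.
rewrite /cell_load (bigD1 j0) //= -[y]addr0; apply: lerD; last first.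
  apply: sumr_ge0 => j /andP[Aj _]; apply/ltW/rate_ln1D_gt0; first exact: w_gt0.
  by rewrite mulr_gt0 ?c_gt0.
have sc0 : 0 < s * c j0 by rewrite mulr_gt0.
have -> : y = w j0 / (s * c j0) by rewrite /s; field; rewrite !gt_eqF.
rewrite ler_pM2l // lef_pV2 ?posrE ?ln_gt0 ?ltrDl // le_ln1Dx //; lra.
Qed.

(* With [M := (\sum_j w j) / y], each term is at most [w j / M] once [t * c j >= exp M];
   [e] is a positive lower bound of [c] on [A]. *)
Lemma cell_load_scale_le c y : (forall j, j \in A -> 0 < c j) -> 0 < y ->
  exists s, forall t, s <= t -> cell_load (fun j => t * c j) <= y.
Proof.
move=> c_gt0 y_gt0; have W_gt0 : 0 < \sum_(j in A) w j by apply: sum_gt0.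
pose M := (\sum_(j in A) w j) / y; have M_gt0 : 0 < M by rewrite divr_gt0.
pose e := (\sum_(j in A) (c j)^-1)^-1.
have e_gt0 : 0 < e by rewrite invr_gt0 sum_gt0 // => j Aj; rewrite invr_gt0 c_gt0.
have e_le j : j \in A -> e <= c j.
  move=> Aj; rewrite -[c j]invrK lef_pV2 ?posrE ?invr_gt0 ?c_gt0 ?sum_gt0 //.
    rewrite (bigD1 j) //= lerDl sumr_ge0 // => k /andP[Ak _].
    by rewrite invr_ge0 ltW ?c_gt0.
  by move=> k Ak; rewrite invr_gt0 c_gt0.
exists (expR M / e).
move=> t st; have t_gt0 : 0 < t by apply: lt_le_trans st; rewrite divr_gt0 ?expR_gt0.
have -> : y = \sum_(j in A) w j / M.
  by rewrite -mulr_suml /M invf_div mulrC divfK ?gt_eqF.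
apply: ler_sum => j Aj; have cj := c_gt0 _ Aj.
rewrite ler_pM2l ?w_gt0 // lef_pV2 ?posrE ?ln_gt0 ?ltrDl ?mulr_gt0 ?invr_gt0 //.
rewrite -[leLHS]expRK ler_ln ?posrE ?expR_gt0 ?addr_gt0 ?mulr_gt0 ?invr_gt0 //.
have : expR M <= t * c j.
  rewrite -ler_pdivrMr //; apply: le_trans st.
  by rewrite ler_pM2l ?expR_gt0 // lef_pV2 ?posrE ?e_le.
lra.
Qed.

Lemma cell_load_scale_eq c y : (forall j, j \in A -> 0 < c j) -> 0 < y ->
  exists2 s, 0 < s & cell_load (fun j => s * c j) = y.
Proof.
move=> c_gt0 y_gt0; pose f s := cell_load (fun j => s * c j).
have [a a_gt0 fa] := cell_load_scale_ge c_gt0 y_gt0.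
have [b fb] := cell_load_scale_le c_gt0 y_gt0.
have ab : a <= Num.max a b by rewrite le_max lexx.
have bm : b <= Num.max a b by rewrite le_max lexx orbT.
have f_cont : {within `[a, Num.max a b], continuous f}.
  apply: continuous_in_subspaceT => s; rewrite inE /= in_itv /= => /andP[a_le_s _].
  apply: cvg_cell_load => j Aj; first by rewrite mulr_gt0 ?c_gt0 ?(lt_le_trans a_gt0).
  by apply: cvgMl; exact: cvg_id.
have [|s] := IVT (v := y) ab f_cont.
  by rewrite ge_min le_max fa (fb _ bm) orbT.
by rewrite in_itv /= => /andP[a_le_s _] fs; exists s => //; exact: lt_le_trans a_le_s.
Qed.

End cell_load.

Section network.
Variables (R : realType) (n m : nat) (J : 'I_n -> {set 'I_m}).
Variables (g : 'I_n -> 'I_m -> R) (s2 : R) (r : 'I_n -> 'I_m -> R).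
Hypothesis J_neq0 : forall i, (0 < #|J i|)%N.
Hypothesis g_gt0 : forall k j, 0 < g k j.
Hypothesis s2_gt0 : 0 < s2.
Hypothesis r_gt0 : forall i j, j \in J i -> 0 < r i j.
Implicit Types (p q x y : 'rV[R]_n) (i k : 'I_n) (j : 'I_m) (s t : R).

(* Instance resolution does not see through the [nbhs] of row vectors. *)
#[local] Instance rV_nbhs_filter (y : 'rV[R]_n) : Filter (nbhs y) := nbhs_filter y.

Definition interference p y i j := \sum_(k < n | k != i) p 0 k * g k j * y 0 k.

Definition sinr s p y i j := s * g i j / (interference p y i j + s2).

Lemma load_mapE p y i :
  load_map J g s2 r p y i = cell_load (J i) (r i) (sinr (p 0 i) p y i).
Proof. by []. Qed.

Lemma sinrZ s p y i j : sinr s p y i j = s * sinr 1 p y i j.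
Proof. by rewrite /sinr mul1r mulrA. Qed.

Lemma eq_interference p q y i j : (forall k, k != i -> q 0 k = p 0 k) ->
  interference q y i j = interference p y i j.
Proof. by move=> qp; apply: eq_bigr => k /qp ->. Qed.

Lemma interference_ge0 p y i j : (forall k, 0 <= p 0 k) -> (forall k, 0 <= y 0 k) ->
  0 <= interference p y i j.
Proof. by move=> p_ge0 y_ge0; apply: sumr_ge0 => k _; rewrite !mulr_ge0 ?p_ge0 ?y_ge0 ?ltW. Qed.

Lemma le_interference p q y i j : (forall k, 0 <= y 0 k) ->
  (forall k, k != i -> q 0 k <= p 0 k) -> interference q y i j <= interference p y i j.
Proof.
move=> y_ge0 qp; apply: ler_sum => k ki.
by rewrite ler_wpM2r ?y_ge0 // ler_wpM2r ?qp // ltW.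
Qed.

Lemma sinr_gt0 s p y i j : 0 < s -> (forall k, 0 <= p 0 k) -> (forall k, 0 <= y 0 k) ->
  0 < sinr s p y i j.
Proof.
move=> s_gt0 p_ge0 y_ge0; rewrite divr_gt0 ?mulr_gt0 //.
by rewrite ltr_wpDl ?interference_ge0.
Qed.

Lemma le_sinr s t p q y i j : 0 <= s <= t ->
  (forall k, 0 <= q 0 k) -> (forall k, 0 <= y 0 k) ->
  (forall k, k != i -> q 0 k <= p 0 k) -> sinr s p y i j <= sinr t q y i j.
Proof.
move=> /andP[s_ge0 st] q_ge0 y_ge0 qp.
have D_gt0 : 0 < interference q y i j + s2 by rewrite ltr_wpDl ?interference_ge0.
have g_ge0 := ltW (g_gt0 i j).
apply: ler_pM; rewrite ?mulr_ge0 ?ler_wpM2r //.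
  by rewrite invr_ge0 (le_trans (ltW D_gt0)) ?lerD2r ?le_interference.
by rewrite lef_pV2 ?posrE ?lerD2r ?le_interference // (lt_le_trans D_gt0) ?lerD2r ?le_interference.
Qed.

Lemma cvg_interference p y i j :
  interference p y' i j @[y' --> y] --> interference p y i j.
Proof.
apply: (cvg_big add_continuous) => k _.
apply: cvgMl_tmp; exact: coord_continuous.
Qed.

Lemma cvg_load_map p y i : (forall k, 0 < p 0 k) -> (forall k, 0 <= y 0 k) ->
  load_map J g s2 r p y' i @[y' --> y] --> load_map J g s2 r p y i.
Proof.
move=> p_gt0 y_ge0; have p_ge0 k := ltW (p_gt0 k).
apply: cvg_cell_load => [j _|j _]; first exact: sinr_gt0.
have D_neq0 : interference p y i j + s2 != 0.
  by rewrite gt_eqF // ltr_wpDl ?interference_ge0.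
exact: cvgMl_tmp (cvgV D_neq0 (cvgD (@cvg_interference p y i j) (cvg_cst s2))).
Qed.

Lemma load_map_scale_lt l p y i : 1 < l ->
  (forall k, 0 < p 0 k) -> (forall k, 0 <= y 0 k) ->
  load_map J g s2 r (l *: p) y i < load_map J g s2 r p y i.
Proof.
move=> l_gt1 p_gt0 y_ge0; have p_ge0 k := ltW (p_gt0 k).
rewrite !load_mapE; apply: (lt_cell_load (J_neq0 i) (@r_gt0 i)) => j _.
apply/andP; split; first exact: sinr_gt0.
have I_ge0 := interference_ge0 i j p_ge0 y_ge0.
rewrite /sinr.
(* scaling all powers by [l] amounts to dividing the noise by [l] *)
have -> : (l *: p) 0 i * g i j / (interference (l *: p) y i j + s2) =
          p 0 i * g i j / (interference p y i j + s2 / l).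
  have -> : interference (l *: p) y i j = l * interference p y i j.
    by rewrite mulr_sumr; apply: eq_bigr => k _; rewrite mxE !mulrA.
  by rewrite mxE; field; rewrite !gt_eqF ?ltr_wpDl ?mulr_ge0 //; lra.
have l_gt0 : 0 < l by apply: lt_trans l_gt1.
have s2l : s2 / l < s2 by rewrite ltr_pdivrMr ?ltr_pMr.
by rewrite ltr_pM2l ?mulr_gt0 // ltf_pV2 ?posrE ?ltrD2l // ltr_wpDl ?divr_gt0.
Qed.

Lemma le_cell_load_sinr s t p q y i : 0 < s <= t ->
  (forall k, 0 <= p 0 k) -> (forall k, 0 <= q 0 k) -> (forall k, 0 <= y 0 k) ->
  (forall k, k != i -> q 0 k <= p 0 k) ->
  cell_load (J i) (r i) (sinr t q y i) <= cell_load (J i) (r i) (sinr s p y i).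
Proof.
move=> /andP[s_gt0 st] p_ge0 q_ge0 y_ge0 qp; apply: (le_cell_load (@r_gt0 i)) => j _.
by rewrite sinr_gt0 ?le_sinr ?(ltW s_gt0).
Qed.

Section least_power.
Variables (y p0 : 'rV[R]_n).
Hypothesis y_gt0 : forall k, 0 < y 0 k.
Hypothesis p0_gt0 : forall k, 0 < p0 0 k.
Hypothesis load_p0_le : forall k, load_map J g s2 r p0 y k <= y 0 k.

Let y_ge0 k : 0 <= y 0 k. Proof. exact: ltW. Qed.

Definition feasible_power q :=
  (forall k, 0 < q 0 k) /\ forall k, load_map J g s2 r q y k <= y 0 k.

Definition least_power := \row_k inf [set q 0 k | q in feasible_power].

Lemma least_power_le q k : feasible_power q -> least_power 0 k <= q 0 k.
Proof.
move=> feas_q; rewrite mxE; apply: inf_lbound; last by exists q.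
by exists 0 => _ [q' [q'_gt0 _] <-]; exact: ltW.
Qed.

Lemma least_power_ge0 k : 0 <= least_power 0 k.
Proof.
rewrite mxE; apply: lb_le_inf; first by exists (p0 0 k), p0.
by move=> _ [q [q_gt0 _] <-]; exact: ltW.
Qed.

Lemma least_power_best_response i : exists2 s, 0 < s &
  cell_load (J i) (r i) (sinr s least_power y i) = y 0 i /\ s <= least_power 0 i.
Proof.
have c_gt0 j : j \in J i -> 0 < sinr 1 least_power y i j.
  by move=> _; apply: sinr_gt0 => //; exact: least_power_ge0.
have [s s_gt0 load_s] := cell_load_scale_eq (J_neq0 i) (@r_gt0 i) c_gt0 (y_gt0 i).
have {}load_s : cell_load (J i) (r i) (sinr s least_power y i) = y 0 i.
  by rewrite -load_s; apply: eq_bigr => j _; rewrite sinrZ.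
exists s => //; split => //; rewrite mxE; apply: lb_le_inf.
  by exists (p0 0 i), p0.
move=> _ [q [q_gt0 load_q] <-]; rewrite leNgt; apply/negP => qs.
have : cell_load (J i) (r i) (sinr s least_power y i) <
       cell_load (J i) (r i) (sinr (q 0 i) least_power y i).
  apply: (lt_cell_load (J_neq0 i) (@r_gt0 i)) => j Jj.
  by rewrite (sinrZ (q 0 i)) (sinrZ s) ltr_pM2r ?c_gt0 // qs andbT mulr_gt0 ?c_gt0.
apply/negP; rewrite -leNgt load_s; apply: le_trans (load_q i).
apply: le_cell_load_sinr => [|k|k|//|k _]; first by rewrite q_gt0 lexx.
- exact: ltW.
- exact: least_power_ge0.
- exact: least_power_le.
Qed.

Lemma least_power_gt0 k : 0 < least_power 0 k.
Proof. by have [s s_gt0 [_ /(lt_le_trans s_gt0)]] := least_power_best_response k. Qed.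

Lemma feasible_least_power : feasible_power least_power.
Proof.
split=> [|i]; first exact: least_power_gt0.
have [s s_gt0 [<- s_le]] := least_power_best_response i.
rewrite load_mapE; apply: le_cell_load_sinr => [|k|k|//|k _] //; first by rewrite s_gt0.
- exact: least_power_ge0.
- exact: least_power_ge0.
Qed.

Lemma least_power_fixed i : y 0 i = load_map J g s2 r least_power y i.
Proof.
have [s s_gt0 [load_s s_le]] := least_power_best_response i.
pose q := \row_k (if k == i then s else least_power 0 k).
have q_gt0 k : 0 < q 0 k by rewrite mxE; case: eqP => // _; exact: least_power_gt0.
have q_ge0 k := ltW (q_gt0 k).
have feas_q : feasible_power q.
  split=> // k; rewrite load_mapE; have [->|ki] := eqVneq k i.
    suff -> : sinr (q 0 i) q y i = sinr s least_power y i by rewrite load_s.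
    apply/funext => j; rewrite /sinr [q 0 i]mxE eqxx (@eq_interference least_power) //.
    by move=> l li; rewrite mxE (negbTE li).
  apply: le_trans (proj2 feasible_least_power k).
  rewrite load_mapE [q 0 k]mxE (negbTE ki).
  apply: le_cell_load_sinr => [|l|//|//|l _]; first by rewrite least_power_gt0 lexx.
  - exact: least_power_ge0.
  - by rewrite mxE; case: eqP => // ->.
have : least_power 0 i <= s by have := least_power_le i feas_q; rewrite [q 0 i]mxE eqxx.
by move=> le_s; rewrite load_mapE -(@le_anti _ _ s (least_power 0 i)) ?s_le.
Qed.

End least_power.

Lemma implementable_of_load_le y p : (forall k, 0 < y 0 k) -> (forall k, 0 < p 0 k) ->
  (forall k, load_map J g s2 r p y k <= y 0 k) -> implementable J g s2 r y.
Proof.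
move=> y_gt0 p_gt0 load_le; split=> [k|]; first exact: ltW.
exists (least_power y); split.
  exact: least_power_gt0 y_gt0 p_gt0 load_le.
exact: least_power_fixed y_gt0 p_gt0 load_le.
Qed.

Lemma implementable_near x p : (forall k, 0 <= x 0 k) -> (forall k, 0 < p 0 k) ->
  (forall k, x 0 k = load_map J g s2 r p x k) ->
  \forall x' \near x, implementable J g s2 r x'.
Proof.
move=> x_ge0 p_gt0 x_fix; have p_ge0 k := ltW (p_gt0 k).
have x_gt0 k : 0 < x 0 k.
  rewrite x_fix load_mapE (cell_load_gt0 (J_neq0 k) (@r_gt0 k)) // => j _.
  exact: sinr_gt0.
have p2_gt0 k : 0 < (2 *: p) 0 k by rewrite mxE mulr_gt0.
have near_gt0 : \forall x' \near x, forall k, 0 < (x' : 'rV[R]_n) 0 k.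
  apply: (filter_forall (nbhs_filter x)) => k.
  exact: cvgr_gt (@coord_continuous _ _ _ 0 k x) _ (x_gt0 k).
have near_load : \forall x' \near x, forall k,
    load_map J g s2 r (2 *: p) x' k < (x' : 'rV[R]_n) 0 k.
  apply: (filter_forall (nbhs_filter x)) => k.
  have load_lt : load_map J g s2 r (2 *: p) x k - x 0 k < 0.
    by rewrite subr_lt0 [ltRHS]x_fix load_map_scale_lt ?ltr1n.
  near=> x'; rewrite -subr_lt0; near: x'.
  exact: cvgr_lt _ (cvgB (cvg_load_map (i := k) p2_gt0 x_ge0)
    (@coord_continuous _ _ _ 0 k x)) _ load_lt.
apply: filterS2 near_gt0 near_load => x' x'_gt0 load_le.
by apply: implementable_of_load_le x'_gt0 p2_gt0 _ => k; exact: ltW.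
Unshelve. all: by end_near. Qed.

End network.

Lemma ler_coord_mx_norm (K : realDomainType) m n (M : 'M[K]_(m, n)) i j :
  `|M i j| <= `|M|.
Proof.
rewrite [leRHS]mx_normrE; apply/bigmax_geP; right => /=.
by exists (i, j).
Qed.

Lemma compact_mx_norm_sphere (R : realType) n :
  compact [set v : 'rV[R]_n | `|v| = 1].
Proof.
apply: bounded_closed_compact.
  by exists 1; split=> [|e e_gt1 v /= ->]; rewrite ?num_real // ltW.
change (closed (Num.Def.normr @^-1` [set (1 : R)] : set 'rV[R]_n)).
apply: closed_comp; last exact: closed_eq.
by move=> v _; exact: norm_continuous.
Qed.

Section is_norm.
Variables (R : realType) (n : nat) (N : 'rV[R]_n -> R).
Hypothesis N_norm : is_norm N.

Lemma is_norm0 : N 0 = 0.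
Proof. by case: N_norm => _ _ NZ _; rewrite -(scale0r 0) NZ normr0 mul0r. Qed.

Lemma is_norm_sum I (s : seq I) (P : pred I) (F : I -> 'rV[R]_n) :
  N (\sum_(i <- s | P i) F i) <= \sum_(i <- s | P i) N (F i).
Proof.
case: N_norm => _ _ _ ND; elim/big_rec2: _ => [|i y1 y2 _ IH]; first by rewrite is_norm0.
by apply: le_trans (ND _ _) _; rewrite lerD2l.
Qed.

Lemma is_norm_le_mx_norm v : N v <= (\sum_(j < n) N 'e_j) * `|v|.
Proof.
case: N_norm => N_ge0 _ NZ _; rewrite {1}(row_sum_delta v).
apply: le_trans (is_norm_sum _ _ _) _; rewrite mulr_suml; apply: ler_sum => j _.
by rewrite NZ mulrC ler_wpM2l ?ler_coord_mx_norm.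
Qed.

Lemma is_norm_dist u v : `|N u - N v| <= N (u - v).
Proof.
case: N_norm => _ _ NZ ND; rewrite ler_norml; apply/andP; split.
- have := ND (v - u) u; rewrite subrK -opprB -scaleN1r NZ normrN normr1 mul1r.
  lra.
- have := ND (u - v) v; rewrite subrK; lra.
Qed.

Lemma is_norm_continuous : continuous N.
Proof.
move=> v; apply/(@cvgrPdist_lt _ _ _ (nbhs v) (nbhs_filter v)) => e e_gt0.
have C_ge0 : 0 <= \sum_(j < n) N 'e_j by apply: sumr_ge0 => j _; case: N_norm.
have d_gt0 : 0 < e / (\sum_(j < n) N 'e_j + 1) by rewrite divr_gt0 // ltr_wpDl.
have := @cvgr_dist_lt _ _ _ (nbhs v) (nbhs_filter v) id v (@cvg_id _ (nbhs v)) _ d_gt0.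
apply: filterS => u vu; rewrite ltr_pdivlMr ?ltr_wpDl // in vu.
apply: le_lt_trans (is_norm_dist _ _) _; apply: le_lt_trans (is_norm_le_mx_norm _) _.
have : 0 <= `|v - u| by []; nra.
Qed.

Lemma is_norm_ge_mx_norm : exists2 c, 0 < c & forall v, c * `|v| <= N v.
Proof.
case: N_norm => N_ge0 N_eq0 NZ _.
have normalize (v : 'rV[R]_n) : v != 0 -> `|(`|v|^-1 *: v)| = 1.
  by move=> v_neq0; rewrite normrZ normfV normr_id mulVf ?normr_eq0.
have [[w w1]|sphere0] := pselect ([set v : 'rV[R]_n | `|v| = 1] !=set0); last first.
  exists 1 => // v; rewrite mul1r; have [->|v_neq0] := eqVneq v 0; first by rewrite normr0.
  by case: sphere0; exists (`|v|^-1 *: v); exact: normalize.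
have [c c1 c_min] := compact_EVT_min (ex_intro _ w w1) (@compact_mx_norm_sphere R n)
  (continuous_subspaceT is_norm_continuous).
have Nc_gt0 : 0 < N c.
  rewrite lt_def N_ge0 andbT; apply: contra_neq (oner_neq0 R) => /N_eq0 c0.
  by move: c1; rewrite inE /= c0 normr0.
exists (N c) => // v; have [->|v_neq0] := eqVneq v 0; first by rewrite normr0 mulr0.
have := c_min (`|v|^-1 *: v); rewrite inE normalize // => /(_ erefl).
by rewrite NZ normfV normr_id mulrC ler_pdivlMr ?normr_gt0.
Qed.

End is_norm.

Theorem theorem4 (R : realType) (n m : nat)
  (J : 'I_n -> {set 'I_m}) (g : 'I_n -> 'I_m -> R) (s2 : R)
  (r : 'I_n -> 'I_m -> R) (x p : 'rV[R]_n) :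
  (forall i, (0 < #|J i|)%N) ->
  (forall i k j, i != k -> j \in J i -> j \notin J k) ->
  (forall k j, 0 < g k j) ->
  0 < s2 ->
  (forall i, forall j, j \in J i -> 0 < r i j) ->
  satisfiable J g r ->
  (forall i, 0 <= x 0 i) ->
  (forall i, 0 < p 0 i) ->
  (forall i, x 0 i = load_map J g s2 r p x i) ->
  (forall N : 'rV[R]_n -> R, is_norm N ->
     exists2 delta : R, 0 < delta &
       forall x' : 'rV[R]_n, N (x' - x) <= delta -> implementable J g s2 r x')
  /\ open (load_region J g s2 r).
Proof.
move=> J_neq0 _ g_gt0 s2_gt0 r_gt0 _ x_ge0 p_gt0 x_fix.
split=> [N N_norm|]; last first.
  rewrite openE => y [y_ge0 [q [q_gt0 y_fix]]].
  exact: implementable_near y_ge0 q_gt0 y_fix.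
have [c c_gt0 cN] := is_norm_ge_mx_norm N_norm.
have /nbhs_ballP[e e_gt0 ball_impl] := implementable_near J_neq0 g_gt0 s2_gt0 r_gt0 x_ge0 p_gt0 x_fix.
exists (c * e / 2) => [|x' Nx']; first by rewrite divr_gt0 ?mulr_gt0.
apply: ball_impl; rewrite -ball_normE /= distrC -(ltr_pM2l c_gt0).
apply: le_lt_trans (cN _) _; apply: le_lt_trans Nx' _.
by rewrite ltr_pdivrMr // ltr_pMr ?mulr_gt0 ?ltr1n.
Qed.
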